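(* Let $n,m\geq 1$, let $(T_1,\dots,T_n)\in\mathscr H_m(n)$ and let $H_n=\Phi(T_1,\dots,T_n)$ be the corresponding $(2m+1)$-historic tree. Then: (i) the number of external vertices of $H_n$ equals the number of leaves of $T_n$; (ii) the number of branchings of $H_n$ equals the number of keys of $T_n$ that are not stored in leaves; (iii) if $n\geq 2m+1$, then for every $i$, letting $v$ be the $i$-th external vertex of $H_n$ from the left and $s$ the number of internal vertices of $H_n$ strictly between $v$ and the closest branching above $v$ (the nearest branching on the path from $v$ to the root), the $i$-th leaf of $T_n$ from the left contains exactly $m+s$ keys.
   Context: Fix an integer $m\geq 1$. A $B$-tree of order $2m+1$ is a rooted plane tree whose nodes contain pairwise distinct real keys such that: keys are stored in increasing order from left to right; a non-leaf node with $k$ keys has exactly $k+1$ children, the $i$-th child being attached between the $(i-1)$-th and $i$-th key of the node, with all keys in the subtree of that child lying between those two keys; every node contains between $m$ and $2m$ keys, except the root, which contains between $1$ and $2m$ keys; and all leaves have the same distance to the root. Insertion algorithm: a new key is placed in the appropriate leaf at the appropriate position; if that leaf now has $2m+1$ keys, it is split: its median key moves up into the parent node, and the $m$ smallest and the $m$ largest keys form two new nodes, which become children of the parent on either side of the moved key; this is repeated at the parent if it now has $2m+1$ keys; if the root gets $2m+1$ keys, a new root containing only its median is created above it, with the two halves as children. $B$-trees are considered up to isomorphism of rooted plane trees; leaves are numbered from left to right. A history $(T_1,\dots,T_n)$ is a sequence of $B$-trees of order $2m+1$ with $T_1$ the single node with one key and $T_i$ obtained from $T_{i-1}$ by inserting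 one key; $\mathscr H_m(n)$ is the set of all histories of length $n$. A $(2m+1)$-historic tree on $n$ vertices is a rooted plane tree with vertices labelled bijectively by $\{1,\dots,n\}$, labels increasing along every root-to-leaf path, such that (root at height $0$) vertices at heights $2m+j(m+1)$, $j\geq0$, called branchings, have two ordered child slots (left, right), each possibly occupied, and all other vertices have a single child slot. Tree vertices are internal; unoccupied slots are external vertices, ordered left to right. The map $\Phi$: $\Phi(T_1)$ is the one-vertex tree; if $\Phi(T_1,\dots,T_k)=H_k$ and $T_{k+1}$ arises from $T_k$ by inserting a key into the $i$-th leaf of $T_k$ (before splits), then $\Phi(T_1,\dots,T_{k+1})$ is obtained from $H_k$ by placing a vertex labelled $k+1$ at the $i$-th external vertex of $H_k$. *)

From mathcomp Require Import all_boot.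
Set Implicit Arguments. Unset Strict Implicit. Unset Printing Implicit Defensive.

(* B-trees of order 2m+1, up to isomorphism of rooted plane trees.          *)
(* Only the shape and the number of keys per node matter:                   *)
(* [BNode k cs] is a node with k keys and children cs ([::] for a leaf).    *)
Inductive btree := BNode of nat & seq btree.

Fixpoint leaf_keys (t : btree) : seq nat :=
  match t with
  | BNode k [::] => [:: k]
  | BNode _ cs => flatten (map leaf_keys cs)
  end.

Definition nleaves (t : btree) : nat := size (leaf_keys t).

Fixpoint inner_keys (t : btree) : nat :=
  match t with
  | BNode _ [::] => 0
  | BNode k cs => k + sumn (map inner_keys cs)
  end.

(* result of inserting into a subtree: either a subtree, or an overflow split
   into two halves whose median key is pushed up into the parent *)
Inductive insres := InsOk of btree | InsSplit of btree & btree.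

(* insert a key into the i-th leaf (0-based, left to right) of t, performing
   the splits of the insertion algorithm (with 2m+1 keys a node splits) *)
Fixpoint ins (m : nat) (t : btree) (i : nat) : insres :=
  match t with
  | BNode k [::] =>
      if k.+1 == (2 * m).+1 then InsSplit (BNode m [::]) (BNode m [::])
      else InsOk (BNode k.+1 [::])
  | BNode k cs =>
      let fix go (cs : seq btree) (i : nat) : seq btree * bool :=
        match cs with
        | [::] => ([::], false)
        | c :: cs' =>
            if i < nleaves c then
              match ins m c i with
              | InsOk c' => (c' :: cs', false)
              | InsSplit l r => (l :: r :: cs', true)
              end
            else let: (cs'', b) := go cs' (i - nleaves c) in (c :: cs'', b)
        end in
      let: (cs', b) := go cs i in
      if b then
        if k.+1 == (2 * m).+1 then
          InsSplit (BNode m (take m.+1 cs')) (BNode m (drop m.+1 cs'))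
        else InsOk (BNode k.+1 cs')
      else InsOk (BNode k cs')
  end.

Definition binsert (m : nat) (t : btree) (i : nat) : btree :=
  match ins m t i with
  | InsOk t' => t'
  | InsSplit l r => BNode 1 [:: l; r]
  end.

Definition bt1 : btree := BNode 1 [::].

(* A history (T_1,...,T_n) is encoded by the sequence s = [:: i_1; ...; i_{n-1}]
   of (0-based) leaf indices: T_{k+1} is obtained from T_k by inserting a key
   into leaf i_k of T_k.  [history_ok] says each index is a leaf of T_k. *)
Fixpoint history_ok (m : nat) (t : btree) (s : seq nat) : bool :=
  match s with
  | [::] => true
  | i :: s' => (i < nleaves t) && history_ok m (binsert m t i) s'
  end.

Definition last_btree (m : nat) (s : seq nat) : btree := foldl (binsert m) bt1 s.

(* (2m+1)-historic trees.  [HNode lab slots]: a vertex labelled lab with its *)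
(* ordered child slots (None = unoccupied slot = external vertex).           *)
Inductive htree := HNode of nat & seq (option htree).

Definition is_branching (m h : nat) : bool :=
  (2 * m <= h) && ((h - 2 * m) %% m.+1 == 0).

Definition hleaf (m h lab : nat) : htree :=
  HNode lab (nseq (if is_branching m h then 2 else 1) None).

Fixpoint n_ext (t : htree) : nat :=
  match t with
  | HNode _ sl => sumn (map (fun o => match o with None => 1 | Some c => n_ext c end) sl)
  end.

Fixpoint nbranch (m h : nat) (t : htree) : nat :=
  match t with
  | HNode _ sl =>
      is_branching m h +
      sumn (map (fun o => match o with None => 0 | Some c => nbranch m h.+1 c end) sl)
  end.

(* place a vertex labelled lab at the i-th (0-based) external vertex of t,
   t being rooted at height h *)
Fixpoint hplace (m h : nat) (t : htree) (i lab : nat) : htree :=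
  match t with
  | HNode l sl =>
      let fix go (sl : seq (option htree)) (i : nat) : seq (option htree) :=
        match sl with
        | [::] => [::]
        | None :: sl' =>
            if i == 0 then Some (hleaf m h.+1 lab) :: sl'
            else None :: go sl' i.-1
        | Some c :: sl' =>
            if i < n_ext c then Some (hplace m h.+1 c i lab) :: sl'
            else Some c :: go sl' (i - n_ext c)
        end in
      HNode l (go sl i)
  end.

(* Phi: H_1 is the one-vertex tree labelled 1; the k-th insertion (into leaf i)
   places a vertex labelled k+1 at the i-th external vertex. *)
Fixpoint phi_aux (m : nat) (H : htree) (k : nat) (s : seq nat) : htree :=
  match s with
  | [::] => H
  | i :: s' => phi_aux m (hplace m 0 H i k.+1) k.+1 s'
  end.

Definition Phi (m : nat) (s : seq nat) : htree := phi_aux m (hleaf m 0 1) 1 s.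

(* For each external vertex v (left to right): Some s where s is the number of
   internal vertices strictly between v and the closest branching above v,
   or None if v has no branching above it.  [acc] is the value for the parent
   context (None at the root). *)
Fixpoint ext_s (m h : nat) (acc : option nat) (t : htree) : seq (option nat) :=
  match t with
  | HNode _ sl =>
      let here := if is_branching m h then Some 0 else omap S acc in
      flatten (map (fun o => match o with
                             | None => [:: here]
                             | Some c => ext_s m h.+1 here c
                             end) sl)
  end.

(* Under Phi, the leaves of T_k and the external vertices of H_k correspond from left
   to right, and the number of keys of a leaf is a function [leaf_size] of the height x
   of its external vertex: x while x <= 2m, and m plus the distance to the branching
   above afterwards.  Inserting into a leaf places a vertex at height x whose slots sit
   at height x+1; the leaf is full (2m keys) exactly when x is a branching height, and
   then it splits into two leaves of m keys and pushes one key into an inner node,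
   matching the two new external vertices and the one new branching.  Before the root
   first overflows, both trees have a single leaf. *)

From mathcomp Require Import all_boot zify.
Set Implicit Arguments. Unset Strict Implicit.

Section Splice.
Variables (T : Type) (x0 : T).

Definition splice (F : T -> seq T) (s : seq T) (i : nat) : seq T :=
  take i s ++ F (nth x0 s i) ++ drop i.+1 s.

Lemma splice_catl F s1 s2 i :
  i < size s1 -> splice F (s1 ++ s2) i = splice F s1 i ++ s2.
Proof.
move=> lt_i_s1; rewrite /splice take_cat nth_cat drop_cat lt_i_s1 -!catA.
case: ltnP => // le_s1_Si; rewrite (drop_oversize le_s1_Si).
by rewrite (_ : i.+1 - size s1 = 0) ?drop0 //; lia.
Qed.

Lemma splice_catr F s1 s2 i :
  size s1 <= i -> splice F (s1 ++ s2) i = s1 ++ splice F s2 (i - size s1).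
Proof.
move=> le_s1_i; rewrite /splice take_cat nth_cat drop_cat !ltnNge le_s1_i.
by rewrite leqW // subSn // -!catA.
Qed.

Lemma all_splice (p : pred T) F s i : i < size s -> all p s ->
  (forall x, p x -> all p (F x)) -> all p (splice F s i).
Proof.
move=> lt_i_s ps pF; rewrite -(cat_take_drop i.+1 s) all_cat in ps.
case/andP: ps => /[swap] pdrop; rewrite (take_nth x0) // -cats1 all_cat /= andbT.
by case/andP=> ptake /pF pFx; rewrite /splice !all_cat ptake pFx.
Qed.

End Splice.

Lemma map_splice (T U : Type) (x0 : T) (f : T -> U) (F : T -> seq T) (G : U -> seq U) s i :
  i < size s -> (forall x, map f (F x) = G (f x)) ->
  map f (splice x0 F s i) = splice (f x0) G (map f s) i.
Proof.
by move=> lt_i_s FG; rewrite /splice !map_cat FG (nth_map x0) // map_take map_drop.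
Qed.

Section BtreeInd.
Variable P : btree -> Prop.
Hypothesis IHnode : forall k cs, foldr (fun c Q => P c /\ Q) True cs -> P (BNode k cs).

Fixpoint btree_nested_ind (t : btree) : P t :=
  let: BNode k cs := t in
  IHnode k ((fix all cs : foldr (fun c Q => P c /\ Q) True cs :=
               if cs is c :: cs' then conj (btree_nested_ind c) (all cs') else I) cs).
End BtreeInd.

Fixpoint btree_wf (t : btree) : bool :=
  let: BNode k cs := t in ((size cs == 0) || (size cs == k.+1)) && all btree_wf cs.

Lemma leaf_keys_node k cs : 0 < size cs -> leaf_keys (BNode k cs) = flatten (map leaf_keys cs).
Proof. by case: cs. Qed.

Lemma inner_keys_node k cs : 0 < size cs -> inner_keys (BNode k cs) = k + sumn (map inner_keys cs).
Proof. by case: cs. Qed.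

Definition leaf_full (m k : nat) : bool := k == 2 * m.

Definition insert_leaf (m k : nat) : seq nat := if leaf_full m k then [:: m; m] else [:: k.+1].

Definition ins_trees (r : insres) : seq btree :=
  match r with InsOk t => [:: t] | InsSplit l r => [:: l; r] end.

Definition ins_split (r : insres) : bool := if r is InsSplit _ _ then true else false.

Definition ins_spec (m : nat) (t : btree) (i : nat) (r : insres) : Prop :=
  [/\ all btree_wf (ins_trees r),
      flatten (map leaf_keys (ins_trees r)) = splice 0 (insert_leaf m) (leaf_keys t) i
    & sumn (map inner_keys (ins_trees r)) + ins_split r
        = inner_keys t + leaf_full m (nth 0 (leaf_keys t) i)].

(* The inner [fix] of [ins], running over the children of a node. *)
Definition ins_children (m : nat) :=
  fix go (cs : seq btree) (i : nat) : seq btree * bool :=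
    match cs with
    | [::] => ([::], false)
    | c :: cs' =>
        if i < nleaves c then
          match ins m c i with
          | InsOk c' => (c' :: cs', false)
          | InsSplit l r => (l :: r :: cs', true)
          end
        else let: (cs'', b) := go cs' (i - nleaves c) in (c :: cs'', b)
    end.

Lemma ins_children_hit m c cs i : i < nleaves c ->
  ins_children m (c :: cs) i = (ins_trees (ins m c i) ++ cs, ins_split (ins m c i)).
Proof. by move=> /= ->; case: ins. Qed.

Lemma ins_children_miss m c cs i : nleaves c <= i ->
  ins_children m (c :: cs) i =
  let: (cs', b) := ins_children m cs (i - nleaves c) in (c :: cs', b).
Proof. by rewrite /= leqNgt => /negbTE ->. Qed.

Lemma ins_node m k c cs i : ins m (BNode k (c :: cs)) i =
  let: (cs', b) := ins_children m (c :: cs) i in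
  if b then
    if k.+1 == (2 * m).+1 then InsSplit (BNode m (take m.+1 cs')) (BNode m (drop m.+1 cs'))
    else InsOk (BNode k.+1 cs')
  else InsOk (BNode k cs').
Proof. by []. Qed.

Lemma ins_children_spec m cs i cs' b :
  foldr (fun c Q => (forall j, btree_wf c -> j < nleaves c -> ins_spec m c j (ins m c j)) /\ Q)
        True cs ->
  all btree_wf cs -> i < size (flatten (map leaf_keys cs)) ->
  ins_children m cs i = (cs', b) ->
  [/\ all btree_wf cs', size cs' = size cs + b,
      flatten (map leaf_keys cs') = splice 0 (insert_leaf m) (flatten (map leaf_keys cs)) i
    & sumn (map inner_keys cs') + b
        = sumn (map inner_keys cs) + leaf_full m (nth 0 (flatten (map leaf_keys cs)) i)].
Proof.
elim: cs i cs' b => [|c cs IHcs] i cs' b // [insc inscs] /andP[wf_c wf_cs] lt_i.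
have {}wf_cs : all btree_wf cs := wf_cs.
have [lt_ic|le_ci] := ltnP i (nleaves c).
  rewrite ins_children_hit // => -[<- <-] {IHcs} /=.
  have [wf_r keys_r inner_r] := insc i wf_c lt_ic.
  rewrite all_cat wf_r wf_cs map_cat flatten_cat keys_r splice_catl // nth_cat lt_ic.
  rewrite size_cat map_cat sumn_cat; split=> //; last by lia.
  by case: (ins m c i) {wf_r keys_r inner_r} => * /=; lia.
rewrite ins_children_miss //; rewrite /nleaves in le_ci *.
case E: ins_children => [cs'' b'] [<- <-]; move: lt_i; rewrite /= size_cat => lt_i.
have [|wf'' size'' keys'' inner''] := IHcs _ _ _ inscs wf_cs _ E; first by lia.
rewrite wf_c wf'' size'' keys'' splice_catr // nth_cat ltnNge le_ci /=; split=> //; lia.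
Qed.

Lemma ins_correct m t i : btree_wf t -> i < nleaves t -> ins_spec m t i (ins m t i).
Proof.
elim/btree_nested_ind: t i => k [|c cs] IHcs i.
  rewrite /nleaves ltnS leqn0 => _ /eqP-> /=.
  by rewrite /ins_spec /splice /insert_leaf /leaf_full eqSS; case: eqP.
move=> /andP[/orP[//|/eqP size_cs] wf_cs] lt_i.
rewrite ins_node; case E: ins_children => [cs' b].
have [wf' size' keys' inner'] := ins_children_spec IHcs wf_cs lt_i E.
rewrite /ins_spec leaf_keys_node // inner_keys_node // -keys'.
move: (c :: cs) size_cs size' inner' {IHcs E wf_cs lt_i keys'} => cs0 size_cs size' inner'.
have cs'_gt0 : 0 < size cs' by rewrite size' size_cs.
rewrite /ins_trees /ins_split.
case: b size' inner' => size' inner'; rewrite ?addn0 ?addn1 in size' inner'.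
  case: eqP => [[full]|_]; cbn [map flatten foldr sumn all btree_wf]; last first.
    by rewrite leaf_keys_node // inner_keys_node // cats0 wf' size' size_cs eqxx; split=> //; lia.
  have size_take' : size (take m.+1 cs') = m.+1 by rewrite size_takel // size' size_cs; lia.
  have size_drop' : size (drop m.+1 cs') = m.+1 by rewrite size_drop size' size_cs; lia.
  rewrite !leaf_keys_node ?size_take' ?size_drop' // !inner_keys_node ?size_take' ?size_drop' //.
  rewrite cats0 -flatten_cat -map_cat cat_take_drop !eqxx !orbT /= andbT -all_cat.
  rewrite cat_take_drop wf'; split=> //.
  by move: inner'; rewrite -{1}(cat_take_drop m.+1 cs') map_cat sumn_cat; lia.
cbn [map flatten foldr sumn all btree_wf].
by rewrite leaf_keys_node // inner_keys_node // cats0 wf' size' size_cs eqxx; split=> //; lia.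
Qed.

Lemma binsert_correct m t i : btree_wf t -> i < nleaves t ->
  [/\ btree_wf (binsert m t i),
      leaf_keys (binsert m t i) = splice 0 (insert_leaf m) (leaf_keys t) i
    & inner_keys (binsert m t i) = inner_keys t + leaf_full m (nth 0 (leaf_keys t) i)].
Proof.
move=> wf_t lt_i; have := ins_correct m wf_t lt_i; rewrite /binsert /ins_spec.
case: (ins m t i) => [t'|l r] /=; rewrite ?andbT ?cats0 ?addn0 //.
by case=> /andP[-> ->] <- <-; split=> //; lia.
Qed.

Section HtreeInd.
Variable P : htree -> Prop.
Hypothesis IHnode : forall l sl,
  foldr (fun o Q => (if o is Some c then P c else True) /\ Q) True sl -> P (HNode l sl).

Fixpoint htree_nested_ind (t : htree) : P t :=
  let: HNode l sl := t in
  IHnode l ((fix all sl : foldr (fun o Q => (if o is Some c then P c else True) /\ Q) True sl :=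
               match sl with
               | [::] => I
               | None :: sl' => conj I (all sl')
               | Some c :: sl' => conj (htree_nested_ind c) (all sl')
               end) sl).
End HtreeInd.

Fixpoint ext_heights (h : nat) (t : htree) : seq nat :=
  let: HNode _ sl := t in
  flatten (map (fun o => if o is Some c then ext_heights h.+1 c else [:: h.+1]) sl).

Lemma n_ext_heights h t : n_ext t = size (ext_heights h t).
Proof.
elim/htree_nested_ind: t h => l sl IHsl h /=.
by elim: sl IHsl => [|[c|] sl IHs] //= [IHc /IHs ->]; rewrite ?size_cat -?IHc.
Qed.

Lemma modn_eq_pred a d : 0 < d -> (a %% d == d.-1) = (d %| a.+1).
Proof.
move=> d_gt0; rewrite {2}(divn_eq a d) -addnS dvdn_addr ?dvdn_mull //.
have := ltn_pmod a d_gt0; set r := a %% d => lt_r_d.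
apply/eqP/idP => [->|/dvdn_leq le_d_Sr]; first by rewrite prednK.
by apply/eqP; rewrite -eqSS prednK // eqn_leq lt_r_d le_d_Sr.
Qed.

Lemma is_branching_above m x : 2 * m < x ->
  is_branching m x = (m.+1 %| (x - (2 * m).+1).+1).
Proof. by move=> lt_2m_x; rewrite /is_branching ltnW // /dvdn -subSn // subSS. Qed.

(* For an external vertex at height x: the number of internal vertices strictly between
   it and the closest branching above it, if there is one (see [ext_s_ext_heights]). *)
Definition branch_gap (m x : nat) : option nat :=
  if x <= 2 * m then None else Some ((x - (2 * m).+1) %% m.+1).

Lemma branch_gap_succ m x :
  branch_gap m x.+1 = if is_branching m x then Some 0 else omap S (branch_gap m x).
Proof.
rewrite /branch_gap; case: (ltngtP x (2 * m)) => [lt_x_2m|lt_2m_x|->].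
- by rewrite /is_branching leqNgt lt_x_2m.
- by rewrite is_branching_above // subSn // modnS; case: ifP.
- by rewrite /is_branching leqnn !subnn.
Qed.

Lemma ext_s_ext_heights m h t :
  ext_s m h (branch_gap m h) t = map (branch_gap m) (ext_heights h t).
Proof.
elim/htree_nested_ind: t h => l sl IHsl h /=; rewrite -branch_gap_succ.
by elim: sl IHsl => [|[c|] sl IHs] //= [IHc /IHs ->]; rewrite ?map_cat ?IHc.
Qed.

Definition leaf_size (m x : nat) : nat := if branch_gap m x is Some g then m + g else x.

Lemma leaf_size_succ m x :
  leaf_size m x.+1 = if is_branching m x then m else (leaf_size m x).+1.
Proof.
rewrite /leaf_size branch_gap_succ.
by case: (branch_gap m x) => [g|]; case: is_branching; rewrite /= ?addn0 ?addnS.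
Qed.

Lemma leaf_full_leaf_size m x : leaf_full m (leaf_size m x) = is_branching m x.
Proof.
rewrite /leaf_full /leaf_size /branch_gap; case: leqP => [le_x_2m|lt_2m_x].
  by rewrite /is_branching; case: ltngtP le_x_2m => // ->; rewrite subnn.
rewrite is_branching_above // -modn_eq_pred //=; set r := _ %% _.
by apply/eqP/eqP; lia.
Qed.

Definition place_heights (m x : nat) : seq nat :=
  nseq (if is_branching m x then 2 else 1) x.+1.

Lemma map_leaf_size_place_heights m x :
  map (leaf_size m) (place_heights m x) = insert_leaf m (leaf_size m x).
Proof.
by rewrite /place_heights /insert_leaf leaf_full_leaf_size map_nseq leaf_size_succ; case: ifP.
Qed.

Definition slots_heights (h : nat) (sl : seq (option htree)) : seq nat :=
  flatten (map (fun o => if o is Some c then ext_heights h.+1 c else [:: h.+1]) sl).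

Definition slots_nbranch (m h : nat) (sl : seq (option htree)) : nat :=
  sumn (map (fun o => if o is Some c then nbranch m h.+1 c else 0) sl).

Lemma slots_heights_cons h o sl : slots_heights h (o :: sl) =
  (if o is Some c then ext_heights h.+1 c else [:: h.+1]) ++ slots_heights h sl.
Proof. by []. Qed.

Lemma slots_nbranch_cons m h o sl : slots_nbranch m h (o :: sl) =
  (if o is Some c then nbranch m h.+1 c else 0) + slots_nbranch m h sl.
Proof. by []. Qed.

Definition hplace_slots (m h lab : nat) :=
  fix go (sl : seq (option htree)) (i : nat) : seq (option htree) :=
    match sl with
    | [::] => [::]
    | None :: sl' => if i == 0 then Some (hleaf m h.+1 lab) :: sl' else None :: go sl' i.-1
    | Some c :: sl' =>
        if i < n_ext c then Some (hplace m h.+1 c i lab) :: sl'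
        else Some c :: go sl' (i - n_ext c)
    end.

Lemma hplace_node m h l sl i lab :
  hplace m h (HNode l sl) i lab = HNode l (hplace_slots m h lab sl i).
Proof. by []. Qed.

Lemma hleaf_ext_heights m h lab : ext_heights h (hleaf m h lab) = place_heights m h.
Proof. by rewrite /hleaf /place_heights; case: ifP. Qed.

Lemma hleaf_nbranch m h lab : nbranch m h (hleaf m h lab) = is_branching m h.
Proof. by rewrite /hleaf; case: ifP => /= ->. Qed.

Definition hplace_spec (m h : nat) (t : htree) (i lab : nat) : Prop :=
  ext_heights h (hplace m h t i lab) = splice 0 (place_heights m) (ext_heights h t) i /\
  nbranch m h (hplace m h t i lab) = nbranch m h t + is_branching m (nth 0 (ext_heights h t) i).

Lemma hplace_slots_spec m h lab sl i :
  foldr (fun o Q => (if o is Some c then forall h' j, j < size (ext_heights h' c) ->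
                       hplace_spec m h' c j lab else True) /\ Q) True sl ->
  i < size (slots_heights h sl) ->
  slots_heights h (hplace_slots m h lab sl i) = splice 0 (place_heights m) (slots_heights h sl) i /\
  slots_nbranch m h (hplace_slots m h lab sl i)
    = slots_nbranch m h sl + is_branching m (nth 0 (slots_heights h sl) i).
Proof.
elim: sl i => [|[c|] sl IHsl] i // [IHc IHs].
all: rewrite !slots_heights_cons !slots_nbranch_cons size_cat => lt_i.
  rewrite [hplace_slots _ _ _ _ _]/= (n_ext_heights h.+1 c) nth_cat.
  have [lt_ic|le_ci] := ltnP i (size (ext_heights h.+1 c)).
    have [heights_c nbranch_c] := IHc h.+1 i lt_ic.
    rewrite !slots_heights_cons !slots_nbranch_cons heights_c nbranch_c splice_catl //.
    by split=> //; lia.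
  have [|heights_s nbranch_s] := IHsl (i - size (ext_heights h.+1 c)) IHs; first by lia.
  rewrite !slots_heights_cons !slots_nbranch_cons heights_s nbranch_s splice_catr //.
  by split=> //; lia.
case: i lt_i => [|i] /= lt_i; rewrite !slots_heights_cons !slots_nbranch_cons.
  rewrite hleaf_ext_heights hleaf_nbranch /splice /= drop0; split=> //; lia.
have [|heights_s nbranch_s] := IHsl i IHs; first by lia.
by rewrite heights_s nbranch_s /=.
Qed.

Lemma hplace_correct m h t i lab : i < size (ext_heights h t) -> hplace_spec m h t i lab.
Proof.
elim/htree_nested_ind: t h i => l sl IHsl h i lt_i.
have [heights_sl nbranch_sl] := hplace_slots_spec IHsl lt_i.
rewrite /hplace_spec hplace_node; split; first exact: heights_sl.
by rewrite [LHS]/= -/(slots_nbranch m h _) nbranch_sl addnA.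
Qed.

Definition historic_invariant (m n : nat) (t : btree) (H : htree) : Prop :=
  [/\ btree_wf t, leaf_keys t = map (leaf_size m) (ext_heights 0 H),
      inner_keys t = nbranch m 0 H
    & if n <= 2 * m then ext_heights 0 H = [:: n]
      else all (leq (2 * m).+1) (ext_heights 0 H)].

Lemma historic_invariant_init m : 0 < m -> historic_invariant m 1 bt1 (hleaf m 0 1).
Proof.
move=> m_gt0; have le_1_2m : 1 <= 2 * m by lia.
have /negbTE two_m_neq0 : 2 * m != 0 by lia.
rewrite /historic_invariant hleaf_ext_heights hleaf_nbranch /place_heights /is_branching.
by rewrite leqn0 two_m_neq0 /= /leaf_size /branch_gap le_1_2m.
Qed.

Lemma historic_invariant_step m n t H i lab :
  historic_invariant m n t H -> i < nleaves t ->
  historic_invariant m n.+1 (binsert m t i) (hplace m 0 H i lab).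
Proof.
move=> [wf_t keys_t inner_t phase] lt_i.
have lt_iH : i < size (ext_heights 0 H) by rewrite /nleaves keys_t size_map in lt_i.
have [wf' keys' inner'] := binsert_correct m wf_t lt_i.
have [heights' nbranch'] := hplace_correct m lab lt_iH.
split=> //.
- by rewrite keys' heights' keys_t (map_splice _ lt_iH (map_leaf_size_place_heights m)).
- by rewrite inner' nbranch' inner_t keys_t (nth_map 0) // leaf_full_leaf_size.
rewrite heights'; case: (leqP n (2 * m)) phase => [le_n_2m heights_H|lt_2m_n all_H].
  move: lt_iH; rewrite heights_H ltnS leqn0 => /eqP->.
  rewrite /splice /place_heights /is_branching /= cats0.
  by case: ltngtP le_n_2m => // -> _; rewrite subnn /= leqnn.
rewrite leqNgt ltnS ltnW //=; apply: all_splice => // x lt_2m_x.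
by rewrite /place_heights all_nseq /= ltnS ltnW ?orbT.
Qed.

Lemma historic_invariant_history m s n t H k :
  history_ok m t s -> historic_invariant m n t H ->
  historic_invariant m (n + size s) (foldl (binsert m) t s) (phi_aux m H k s).
Proof.
elim: s n t H k => [|i s IHs] n t H k /=; first by rewrite addn0.
by case/andP=> lt_i ok_s inv; rewrite -addSnnS; apply/IHs/historic_invariant_step.
Qed.

Theorem proposition1p2 (m n : nat) (s : seq nat) :
  1 <= m -> 1 <= n -> size s = n.-1 -> history_ok m bt1 s ->
  [/\ n_ext (Phi m s) = nleaves (last_btree m s),
      nbranch m 0 (Phi m s) = inner_keys (last_btree m s)
    & (2 * m).+1 <= n ->
      forall i, i < n_ext (Phi m s) ->
        exists s0, nth None (ext_s m 0 None (Phi m s)) i = Some s0 /\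
                   nth 0 (leaf_keys (last_btree m s)) i = m + s0].
Proof.
move=> m_gt0 n_gt0 size_s ok_s.
have := historic_invariant_history 1 ok_s (historic_invariant_init m_gt0).
rewrite /Phi /last_btree size_s add1n prednK //.
set H := phi_aux _ _ _ _.
case=> _ keys -> phase; split=> //; first by rewrite (n_ext_heights 0) /nleaves keys size_map.
rewrite -[None]/(branch_gap m 0) ext_s_ext_heights keys (n_ext_heights 0).
move=> lt_2m_n i lt_i; rewrite leqNgt lt_2m_n in phase.
have lt_2m_x : 2 * m < nth 0 (ext_heights 0 H) i := allP phase _ (mem_nth 0 lt_i).
by rewrite !(nth_map 0) // /leaf_size /branch_gap leqNgt lt_2m_x; eexists.
Qed.
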